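(* Let $\beta\in[0,1)$ and let $\lambda$ be a principal eigenvalue of $\Delta_\beta$. Then $\lambda\le1$. Moreover, if $\beta\in(0,\tfrac12]$, then $\lambda<1$.
   Context: Tree: for an integer $m\ge2$, $\mathbb{T}_m$ has vertices the root $\emptyset$ and all finite sequences $(\emptyset,a_1,\dots,a_k)$, $a_i\in\{0,\dots,m-1\}$; $|x|$ is the level, successors of $x$ are $(x,i)$, $\hat x$ is the immediate predecessor of $x\ne\emptyset$. A branch is an infinite sequence $(x_n)_{n\ge0}$ with $x_0=\emptyset$, $x_{n+1}$ a successor of $x_n$; $\partial\mathbb{T}_m$ is the set of branches; $\lim_{x\to y}u(x)=\lim_n u(x_n)$ for $y=(x_n)$. Operator: $p_\beta=1$ if $\beta=0$, $p_\beta=\beta/(1-\beta)$ if $\beta\in(0,1)$. $\Delta_\beta u(\emptyset)=\frac1m\sum_{i=0}^{m-1}u(\emptyset,i)-u(\emptyset)$ and, for $x\ne\emptyset$, $\Delta_\beta u(x)=\big(\beta u(\hat x)+\frac{1-\beta}{m}\sum_{i=0}^{m-1}u(x,i)-u(x)\big)p_\beta^{-|x|}$. Eigenvalues: $\lambda\in\mathbb{R}$ is an eigenvalue of $\Delta_\beta$ if there is a bounded $u:\mathbb{T}_m\to\mathbb{R}$, $u\not\equiv0$, with $-\Delta_\beta u=\lambda u$ on $\mathbb{T}_m$ and $\lim_{x\to y}u(x)=0$ for every $y\in\partial\mathbb{T}_m$. An eigenvalue $\lambda>0$ is principal if it has a non-negative eigenfunction. *)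

From HB Require Import structures.
From mathcomp Require Import all_boot all_order all_algebra.
From mathcomp Require Import all_classical all_reals all_analysis.
Set Implicit Arguments. Unset Strict Implicit. Unset Printing Implicit Defensive.
Import Order.TTheory GRing.Theory Num.Theory.
Import numFieldNormedType.Exports.
Local Open Scope classical_set_scope.
Local Open Scope ring_scope.

(* Vertices of T_m: a vertex (root, a_1, ..., a_k) is encoded as the list
   [:: a_k; ...; a_1] (most recent letter first).  Root = [::],
   successor (x,i) = i :: x, predecessor of i :: x is x, level = size. *)
Definition vertex (m : nat) := seq 'I_m.

Definition level (m : nat) (x : vertex m) : nat := size x.

Definition is_branch (m : nat) (xs : nat -> vertex m) : Prop :=
  xs 0%N = [::] /\ forall n : nat, exists i : 'I_m, xs n.+1 = i :: xs n.

Definition p_beta (R : realType) (beta : R) : R :=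
  if beta == 0 then 1 else beta / (1 - beta).

Definition Delta (R : realType) (m : nat) (beta : R) (u : vertex m -> R)
  (x : vertex m) : R :=
  match x with
  | [::] => m%:R^-1 * (\sum_(i < m) u (i :: [::])) - u [::]
  | _ :: xh =>
      (beta * u xh + (1 - beta) / m%:R * (\sum_(i < m) u (i :: x)) - u x)
        * (p_beta beta ^+ level x)^-1
  end.

Definition bounded_fun (R : realType) (m : nat) (u : vertex m -> R) : Prop :=
  exists M : R, forall x, `|u x| <= M.

Definition eigenfunction (R : realType) (m : nat) (beta lambda : R)
  (u : vertex m -> R) : Prop :=
  [/\ bounded_fun u,
      exists x, u x != 0,
      forall x, - Delta beta u x = lambda * u x &
      forall xs : nat -> vertex m, is_branch xs ->
        ((fun n => u (xs n)) @ \oo --> (0 : R))%classic].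

Definition is_eigenvalue (R : realType) (m : nat) (beta lambda : R) : Prop :=
  exists u : vertex m -> R, eigenfunction beta lambda u.

Definition principal_eigenvalue (R : realType) (m : nat) (beta lambda : R)
  : Prop :=
  0 < lambda /\
  exists u : vertex m -> R, eigenfunction beta lambda u /\ forall x, 0 <= u x.

From HB Require Import structures.
From mathcomp Require Import all_boot all_order all_algebra.
From mathcomp Require Import all_classical all_reals all_analysis.
From mathcomp Require Import ring lra.
Set Implicit Arguments. Unset Strict Implicit. Unset Printing Implicit Defensive.
Import Order.TTheory GRing.Theory Num.Theory.
Local Open Scope ring_scope.

(* A nonnegative eigenfunction that vanishes at a vertex vanishes at all its
   children, since the eigen-equation there makes a nonnegative average of the
   children equal to zero.  Hence it is positive at the root, and the equation
   at the root, average of the children = (1 - lambda) u(root), forces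
   lambda <= 1.  If lambda = 1 the children of the root vanish, and for
   beta > 0 the equation at a child reads
   beta u(root) + (nonnegative average of grandchildren) = 0, impossible. *)

Lemma p_beta_neq0 (R : realType) (beta : R) :
  0 <= beta -> beta < 1 -> p_beta beta != 0.
Proof.
move=> beta_ge0 beta_lt1; rewrite /p_beta; case: ifP => [_|/negbT beta_neq0].
  exact: oner_neq0.
by rewrite mulf_neq0 // invr_eq0 subr_eq0 gt_eqF.
Qed.

Section NonnegativeEigenfunction.

Variables (R : realType) (m : nat) (beta lambda : R) (u : vertex m -> R).
Hypothesis m_gt0 : (0 < m)%N.
Hypotheses (beta_ge0 : 0 <= beta) (beta_lt1 : beta < 1).
Hypothesis eigen : forall x, - Delta beta u x = lambda * u x.
Hypothesis u_ge0 : forall x, 0 <= u x.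

Let m_neq0 : (m%:R : R) != 0. Proof. by rewrite pnatr_eq0 -lt0n. Qed.

Lemma eigen_root :
  m%:R^-1 * (\sum_(i < m) u (i :: [::])) = (1 - lambda) * u [::].
Proof. by have := eigen [::]; rewrite /Delta => e; lra. Qed.

Lemma eigen_cons (i : 'I_m) (x : vertex m) :
  beta * u x + (1 - beta) / m%:R * (\sum_(j < m) u (j :: i :: x)) - u (i :: x)
  = - lambda * u (i :: x) * p_beta beta ^+ (size x).+1.
Proof.
have p_neq0 : p_beta beta ^+ (size x).+1 != 0 by rewrite expf_neq0 ?p_beta_neq0.
apply: (mulIf (invr_neq0 p_neq0)); rewrite mulfK //.
by have := eigen (i :: x); rewrite /Delta /level /= => e; rewrite -[LHS]opprK e mulNr.
Qed.

Lemma children_sum_ge0 (x : vertex m) : 0 <= \sum_(i < m) u (i :: x).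
Proof. by apply: sumr_ge0 => i _. Qed.

Lemma scaled_children_sum_ge0 (x : vertex m) :
  0 <= (1 - beta) / m%:R * (\sum_(i < m) u (i :: x)).
Proof.
by rewrite mulr_ge0 ?divr_ge0 ?subr_ge0 ?ler0n ?children_sum_ge0 ?(ltW beta_lt1).
Qed.

Lemma children_eq0 (x : vertex m) :
  \sum_(i < m) u (i :: x) = 0 -> forall i : 'I_m, u (i :: x) = 0.
Proof. by move=> s0 i; apply: (psumr_eq0P (fun j _ => u_ge0 (j :: x)) s0). Qed.

Lemma eigen_children_eq0 (x : vertex m) :
  u x = 0 -> forall i : 'I_m, u (i :: x) = 0.
Proof.
move=> ux0; apply: children_eq0; case: x ux0 => [|j x] ux0.
  apply/eqP; move: eigen_root; rewrite ux0 mulr0 => /eqP.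
  by rewrite mulf_eq0 invr_eq0 (negbTE m_neq0).
have := eigen_cons j x; rewrite ux0 !mulr0 mul0r subr0 => e.
have /eqP : (1 - beta) / m%:R * (\sum_(i < m) u (i :: j :: x)) = 0.
  have : 0 <= beta * u x by rewrite mulr_ge0.
  have := scaled_children_sum_ge0 (j :: x).
  lra.
rewrite mulf_eq0 mulf_eq0 invr_eq0 (negbTE m_neq0) orbF subr_eq0 eq_sym.
by rewrite lt_eqF // => /eqP.
Qed.

Lemma eigen_root_eq0 : u [::] = 0 -> forall x, u x = 0.
Proof. by move=> u0; elim=> // i x IH; exact: eigen_children_eq0. Qed.

Lemma eigen_root_gt0 : (exists x, u x != 0) -> 0 < u [::].
Proof.
move=> [x ux_neq0]; rewrite lt_def u_ge0 andbT.
by apply: contraNneq ux_neq0 => /eigen_root_eq0 ->.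
Qed.

Lemma eigenvalue_le1 : (exists x, u x != 0) -> lambda <= 1.
Proof.
move=> /eigen_root_gt0 u0_gt0; rewrite -subr_ge0 -(pmulr_lge0 _ u0_gt0).
by rewrite -eigen_root mulr_ge0 ?invr_ge0 ?ler0n ?children_sum_ge0.
Qed.

Lemma eigenvalue_neq1 : 0 < beta -> (exists x, u x != 0) -> lambda != 1.
Proof.
move=> beta_gt0 /eigen_root_gt0 u0_gt0; apply/eqP => lambda1.
have /children_eq0 child0 : \sum_(i < m) u (i :: [::]) = 0.
  apply/eqP; move: eigen_root; rewrite lambda1 subrr mul0r => /eqP.
  by rewrite mulf_eq0 invr_eq0 (negbTE m_neq0).
pose i0 : 'I_m := Ordinal m_gt0.
have := eigen_cons i0 [::]; rewrite child0 subr0 mulr0 mul0r.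
have := scaled_children_sum_ge0 [:: i0].
have : 0 < beta * u [::] by rewrite mulr_gt0.
lra.
Qed.

End NonnegativeEigenfunction.

Theorem lemma3p2 (R : realType) (m : nat) (beta lambda : R) :
  (2 <= m)%N -> 0 <= beta -> beta < 1 ->
  @principal_eigenvalue R m beta lambda ->
  lambda <= 1 /\ (0 < beta -> beta <= 2^-1 -> lambda < 1).
Proof.
move=> m_ge2 beta_ge0 beta_lt1 [_ [u [[_ u_neq0 eigen _] u_ge0]]].
have m_gt0 : (0 < m)%N by apply: leq_trans m_ge2.
have le1 := eigenvalue_le1 m_gt0 beta_ge0 beta_lt1 eigen u_ge0 u_neq0.
split=> // beta_gt0 _.
by rewrite lt_neqAle le1 (eigenvalue_neq1 m_gt0 beta_ge0 beta_lt1 eigen u_ge0).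
Qed.
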